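(* Let $p\ge1$, $k\ge1$, $r\in\{0,\dots,p\}$ and let $(c,\{f_i\}_{i=0}^k)$ be a piecewise affine VAR (see context) for which there exists $\alpha\in\mathbb R^{p\times r}$ of rank $r$ such that (1) $c=\alpha\mu$, $\bar\pi^{(\ell)}=\alpha\bar\mu^{(\ell)}$ and $\Pi^{(\ell)}=\alpha\beta^{(\ell)\top}$ for some $\mu,\bar\mu^{(\ell)}\in\mathbb R^r$ and $\beta^{(\ell)}\in\mathbb R^{p\times r}$, for all $\ell\in\{1,\dots,L\}$; and (2) $f_0:\mathbb R^p\to\mathbb R^p$ is a homeomorphism, with each $\Phi_0^{(\ell)}$ invertible. Let $\theta(z)=\sum_{\ell=1}^L\mathbf 1\{z\in\mathscr Z^{(\ell)}\}(\bar\mu^{(\ell)}+\beta^{(\ell)\top}z)$ (so that $\pi=\alpha\theta$). Then for all $\mathbf z=(z^\top,\boldsymbol\zeta^\top)^\top,\mathbf z'=(z'^\top,\boldsymbol\zeta'^\top)^\top\in\mathbb R^p\times\mathbb R^{p(k-1)}$ there exists $\boldsymbol\beta\in\mathcal B\defeq\operatorname{co}\{\boldsymbol\beta^{(\ell)}\}_{\ell=1}^L$ with $$[\boldsymbol\theta(f_0^{-1}(z))+\mathbf D_0\mathbf z]-[\boldsymbol\theta(f_0^{-1}(z'))+\mathbf D_0\mathbf z']=\boldsymbol\beta^\top(\mathbf z-\mathbf z'),$$ and $$\rho_{JSR}(\{I_{p(k-1)+r}+\boldsymbol\beta^\top\boldsymbol\alpha:\boldsymbol\beta\in\mathcal B\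})=\rho_{JSR}(\{I_{p(k-1)+r}+\boldsymbol\beta^{(\ell)\top}\boldsymbol\alpha\}_{\ell=1}^L).$$
   Context: Piecewise affine VAR: $\{\mathscr Z^{(\ell)}\}_{\ell=1}^L$ partitions $\mathbb R^p$ into convex sets and, for $i=0,\dots,k$, $f_i(z)=\sum_{\ell=1}^L\mathbf 1\{z\in\mathscr Z^{(\ell)}\}(\bar\phi_i^{(\ell)}+\Phi_i^{(\ell)}z)$ with each $f_i$ continuous, $f_i(0)=0$; model $f_0(z_t)=c+\sum_{i=1}^kf_i(z_{t-i})+u_t$. $\bar\pi^{(\ell)}=-(\bar\phi_0^{(\ell)}-\sum_{i=1}^k\bar\phi_i^{(\ell)})$, $\Pi^{(\ell)}=-(\Phi_0^{(\ell)}-\sum_{i=1}^k\Phi_i^{(\ell)})$, $\Gamma_j^{(\ell)}=-\sum_{i=j+1}^k\Phi_i^{(\ell)}$, $\boldsymbol\Gamma^{(\ell)}=(\Gamma_1^{(\ell)\top},\dots,\Gamma_{k-1}^{(\ell)\top})^\top$, $\boldsymbol\beta^{(\ell)\top}=\begin{bmatrix}\beta^{(\ell)\top}(\Phi_0^{(\ell)})^{-1}&0\\\boldsymbol\Gamma^{(\ell)}(\Phi_0^{(\ell)})^{-1}&D\end{bmatrix}$. $g_j(z)=-\sum_{i=j+1}^kf_i(z)$, $\mathbf g=(g_1^\top,\dots,g_{k-1}^\top)^\top$, $\boldsymbol\theta=(\theta^\top,\mathbf g^\top)^\top$. $D\in\mathbb R^{p(k-1)\times p(k-1)}$ has $-I_p$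 diagonal blocks, $I_p$ blocks immediately above the diagonal, zeros elsewhere (empty when $k=1$); $E=(I_p,0_{p\times p(k-2)})^\top$; $\mathbf D_0=\begin{bmatrix}0_{r\times p}&0\\0&D\end{bmatrix}$; $\boldsymbol\alpha=\begin{bmatrix}\alpha & E^\top\\ 0 & I_{p(k-1)}\end{bmatrix}$. $\operatorname{co}$ denotes convex hull. $\rho_{JSR}(\mathcal A)=\limsup_{t}\sup\{\rho(M_1\cdots M_t)^{1/t}:M_s\in\mathcal A\}$. *)

From HB Require Import structures.
From mathcomp Require Import all_boot all_order all_algebra.
From mathcomp Require Import all_classical all_reals all_analysis.
From mathcomp Require Import complex.

Set Implicit Arguments.
Unset Strict Implicit.
Unset Printing Implicit Defensive.

Import Order.TTheory GRing.Theory Num.Theory.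
Import numFieldNormedType.Exports.

Local Open Scope classical_set_scope.
Local Open Scope ring_scope.

(* Block indexing of R^{(k-1)p} = stacked vectors (v_1; ...; v_{k-1}),  *)
(* each v_a in R^p.  A row index i : 'I_(m * p) lies in block i %/ p  *)
(* (0-based) at position i %% p inside the block.                      *)

Lemma blk_pos_proof (m p : nat) (i : 'I_(m * p)) : (i %% p < p)%N.
Proof.
case: p i => [|p] i; last by rewrite ltn_mod.
by case: i => i /=; rewrite muln0.
Qed.

Definition blk_pos (m p : nat) (i : 'I_(m * p)) : 'I_p :=
  Ordinal (blk_pos_proof i).

Section Defs.
Variable R : realType.

Definition stackv (m p : nat) (v : nat -> 'cV[R]_p) : 'cV[R]_(m * p) :=
  \col_(i < m * p) v (i %/ p)%N (blk_pos i) 0.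

Definition stackM (m p q : nat) (M : nat -> 'M[R]_(p, q)) : 'M[R]_(m * p, q) :=
  \matrix_(i < m * p, j < q) M (i %/ p)%N (blk_pos i) j.

(* D in R^{p(k-1) x p(k-1)}: -I_p diagonal blocks, I_p blocks immediately
   above the diagonal, 0 elsewhere (here m = k-1). *)
Definition Dmx (m p : nat) : 'M[R]_(m * p) :=
  \matrix_(i < m * p, j < m * p)
    if (i %% p == j %% p)%N then
      ((j %/ p == (i %/ p).+1)%N%:R - (i %/ p == j %/ p)%N%:R)
    else 0.

Definition ETmx (m p : nat) : 'M[R]_(p, m * p) :=
  \matrix_(b < p, i < m * p) ((i : nat) == (b : nat))%:R.

Definition pwaff (p q L : nat) (Z : 'I_L -> set 'cV[R]_p)
    (a : 'I_L -> 'cV[R]_q) (A : 'I_L -> 'M[R]_(q, p)) (z : 'cV[R]_p)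
    : 'cV[R]_q :=
  \sum_(l < L) (\1_(Z l) z : R) *: (a l + A l *m z).

Definition convex_partition (p L : nat) (Z : 'I_L -> set 'cV[R]_p) : Prop :=
  (forall l x y (t : R), Z l x -> Z l y -> 0 <= t <= 1 ->
      Z l (t *: x + (1 - t) *: y)) /\
  (forall l l', l != l' -> Z l `&` Z l' = set0) /\
  (\bigcup_(l in [set: 'I_L]) Z l = [set: 'cV[R]_p]).

Definition conv_hull (L m n : nat) (F : 'I_L -> 'M[R]_(m, n)) : set 'M[R]_(m, n) :=
  [set B | exists w : 'I_L -> R,
      (forall l, 0 <= w l) /\ \sum_(l < L) w l = 1 /\
      B = \sum_(l < L) w l *: F l].

(* spectral radius: largest modulus of a complex eigenvalue
   (sup of the empty set is 0, i.e. rho of a 0x0 matrix is 0) *)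
Definition spec_rad (n : nat) (M : 'M[R]_n) : R :=
  sup [set ComplexField.Normc.normc lam | lam in
         [set lam : R[i] | eigenvalue (map_mx (fun x => (x%:C)%C) M) lam]].

Definition jsr (n : nat) (A : set 'M[R]_n) : \bar R :=
  limn_esup (fun t : nat =>
    ereal_sup [set ((spec_rad (\big[@mulmx R n n n/1%:M]_(s < t) Ms s))
                      `^ (t%:R^-1))%:E
              | Ms in [set Ms : 'I_t -> 'M[R]_n | forall s, A (Ms s)]]).

(* The piecewise affine VAR  f_0(z_t) = c + sum_{i=1}^k f_i(z_{t-i}) + u_t *)
Section VAR.
Variables (p k L : nat).
Variable Z : 'I_L -> set 'cV[R]_p.
Variable phibar : 'I_k.+1 -> 'I_L -> 'cV[R]_p.
Variable Phi : 'I_k.+1 -> 'I_L -> 'M[R]_p.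

Definition fVAR (i : 'I_k.+1) : 'cV[R]_p -> 'cV[R]_p :=
  pwaff Z (phibar i) (Phi i).

Definition pibarVAR (l : 'I_L) : 'cV[R]_p :=
  - (phibar ord0 l - \sum_(i < k.+1 | (0 < i)%N) phibar i l).

Definition PiVAR (l : 'I_L) : 'M[R]_p :=
  - (Phi ord0 l - \sum_(i < k.+1 | (0 < i)%N) Phi i l).

Definition GammaVAR (j : nat) (l : 'I_L) : 'M[R]_p :=
  - \sum_(i < k.+1 | (j < i)%N) Phi i l.

Definition bGammaVAR (l : 'I_L) : 'M[R]_(k.-1 * p, p) :=
  stackM k.-1 (fun a => GammaVAR a.+1 l).

Definition gVAR (j : nat) (z : 'cV[R]_p) : 'cV[R]_p :=
  - \sum_(i < k.+1 | (j < i)%N) fVAR i z.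

Definition bgVAR (z : 'cV[R]_p) : 'cV[R]_(k.-1 * p) :=
  stackv k.-1 (fun a => gVAR a.+1 z).

Variable r : nat.
Variable mubar : 'I_L -> 'cV[R]_r.
Variable beta : 'I_L -> 'M[R]_(p, r).

Definition thetaVAR (z : 'cV[R]_p) : 'cV[R]_r :=
  pwaff Z mubar (fun l => (beta l)^T) z.

Definition bthetaVAR (z : 'cV[R]_p) : 'cV[R]_(r + k.-1 * p) :=
  col_mx (thetaVAR z) (bgVAR z).

Definition bbetaT (l : 'I_L) : 'M[R]_(r + k.-1 * p, p + k.-1 * p) :=
  block_mx ((beta l)^T *m invmx (Phi ord0 l)) 0
           (bGammaVAR l *m invmx (Phi ord0 l)) (Dmx k.-1 p).

Definition bD0 : 'M[R]_(r + k.-1 * p, p + k.-1 * p) :=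
  block_mx 0 0 0 (Dmx k.-1 p).

Variable alpha : 'M[R]_(p, r).

Definition balpha : 'M[R]_(p + k.-1 * p, r + k.-1 * p) :=
  block_mx alpha (ETmx k.-1 p) 0 1%:M.

End VAR.

End Defs.

(* Along the segment from z' to z, the map y |-> btheta (f0^-1 y) is continuous and,
   on each of the finitely many pieces {t | f0^-1 (z' + t (z - z')) \in Z_l}, affine with
   slope J_l (z - z'), where J_l is the left block column of bbeta^(l)^T.  Cutting the
   segment at the infimum of the piece that reaches its end shows, by induction on the
   number of pieces, that the increment is a convex combination of the J_l (z - z');
   the linear part D_0 is common to all bbeta^(l).
   For the joint spectral radius, every power of a product of t matrices of the convex
   hull is a convex combination of products of vertices, so the traces of these powers
   grow no faster than the vertex products do.  After Schur triangularization the traces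
   of powers are power sums of the eigenvalues, and a geometric bound on power sums bounds
   every eigenvalue modulus. *)

From HB Require Import structures.
From mathcomp Require Import all_boot all_order all_algebra.
From mathcomp Require Import all_classical all_reals all_analysis.
From mathcomp Require Import complex.
From mathcomp Require Import ring lra.
Import Order.TTheory GRing.Theory Num.Theory.
Import numFieldNormedType.Exports.
Local Open Scope classical_set_scope.
Local Open Scope ring_scope.
Set Implicit Arguments.
Unset Strict Implicit.
Unset Printing Implicit Defensive.

Local Notation normc := ComplexField.Normc.normc.

Section ComplexModulus.
Variable R : rcfType.

Lemma normc_ge0 (x : R[i]) : 0 <= normc x.
Proof. by case: x => a b; exact: sqrtr_ge0. Qed.

Lemma normc_sum_le (I : Type) (r : seq I) (P : pred I) (F : I -> R[i]) :
  normc (\sum_(i <- r | P i) F i) <= \sum_(i <- r | P i) normc (F i).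
Proof.
elim/big_rec2: _ => [|i y1 y2 _ IH]; first by rewrite ComplexField.Normc.normc0.
by apply: le_trans (le_normcD _ _) _; rewrite lerD2l.
Qed.

Lemma normcX (x : R[i]) m : normc (x ^+ m) = normc x ^+ m.
Proof.
elim: m => [|m IH]; first by rewrite !expr0 ComplexField.Normc.normc1.
by rewrite !exprS ComplexField.Normc.normcM IH.
Qed.

Lemma normc_real (x : R) : normc (x%:C)%C = `|x|.
Proof. by rewrite /= expr0n /= addr0 sqrtr_sqr. Qed.

End ComplexModulus.

Lemma power_sums_isolate (C : numFieldType) n (x : 'I_n -> C) (i0 : 'I_n) :
  exists2 c : C, c != 0 & exists Q : {poly C}, forall m,
    \sum_(a < size Q) Q`_a * (\sum_i x i ^+ (m + a)) = c * x i0 ^+ m.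
Proof.
(* Q kills every x i different from x i0. *)
pose Q := \prod_(j | x j != x i0) ('X - (x j)%:P).
have QE y : Q.[y] = \prod_(j | x j != x i0) (y - x j).
  by rewrite horner_prod; apply: eq_bigr => j _; rewrite hornerXsubC.
exists (#|[pred j | x j == x i0]|%:R * Q.[x i0]).
  rewrite mulf_neq0 // ?pnatr_eq0 -?lt0n; first by apply/card_gt0P; exists i0; rewrite inE.
  by rewrite QE; apply/prodf_neq0 => j; rewrite subr_eq0 eq_sym.
exists Q => m; under eq_bigr => a _ do rewrite mulr_sumr.
rewrite exchange_big /= (eq_bigr (fun i => x i ^+ m * Q.[x i])); last first.
  move=> i _; rewrite horner_coef mulr_sumr; apply: eq_bigr => a _.
  by rewrite exprD mulrCA.
rewrite (bigID [pred j | x j == x i0]) /= [X in _ + X]big1 ?addr0; last first.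
  by move=> i xi; rewrite QE (bigD1 i) //= subrr mul0r mulr0.
rewrite (eq_bigr (fun _ => x i0 ^+ m * Q.[x i0])); last by move=> i /eqP ->.
by rewrite sumr_const; ring.
Qed.

Lemma bernoulli_ineq (R : numDomainType) (h : R) m :
  0 <= h -> 1 + m%:R * h <= (1 + h) ^+ m.
Proof.
move=> h0; elim: m => [|m IH]; first by rewrite mul0r addr0 expr0.
rewrite exprS (le_trans _ (ler_wpM2l _ IH)) ?addr_ge0 //.
rewrite mulrDl mul1r mulrDr mulr1 -natr1 mulrDl mul1r addrA lerD2l lerDl.
by rewrite mulr_ge0 // mulr_ge0.
Qed.

Lemma ler_of_geometric_bound (R : archiRealFieldType) (nu q c B : R) N :
  0 < c -> 0 <= q -> 0 <= nu ->
  (forall m, (N <= m)%N -> c * nu ^+ m <= B * q ^+ m) -> nu <= q.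
Proof.
move=> c0 q0 nu0 bound; rewrite leNgt; apply/negP => lt_q_nu.
have nu_gt0 : 0 < nu by exact: le_lt_trans lt_q_nu.
have [q_eq0|q_neq0] := eqVneq q 0.
  have := bound N.+1 (leqnSn N); rewrite q_eq0 expr0n mulr0 leNgt => /negP; apply.
  by rewrite mulr_gt0 ?exprn_gt0.
have q_gt0 : 0 < q by rewrite lt_def q_neq0.
set h := nu / q - 1.
have h_gt0 : 0 < h by rewrite subr_gt0 ltr_pdivlMr // mul1r.
have linear_bound m : (N <= m)%N -> c * (1 + m%:R * h) <= B.
  move=> Nm; apply: le_trans (_ : c * (1 + h) ^+ m <= _).
    by apply: ler_wpM2l; [exact: ltW | exact: bernoulli_ineq (ltW h_gt0)].
  rewrite /h addrC subrK expr_div_n mulrA ler_pdivrMr ?exprn_gt0 //.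
  exact: bound.
set k := Num.Def.archi_bound (`|B| / (c * h)).
have lt_B : `|B| < k%:R * (c * h).
  rewrite -ltr_pdivrMr ?mulr_gt0 //.
  exact: archi_boundP (divr_ge0 (normr_ge0 B) (ltW (mulr_gt0 c0 h_gt0))).
have le_k : k%:R <= (N + k)%N%:R :> R by rewrite ler_nat leq_addl.
have := linear_bound (N + k)%N (leq_addr _ _); rewrite leNgt => /negP; apply.
apply: le_lt_trans (ler_norm B) (lt_le_trans lt_B _).
rewrite mulrCA ler_wpM2l ?(ltW c0) //.
by apply: le_trans (ler_wpM2r (ltW h_gt0) le_k) _; rewrite lerDr ler01.
Qed.

Lemma normc_le_of_power_sums (R : realType) n (x : 'I_n -> R[i]) (K q : R) N :
  0 <= q ->
  (forall m, (N <= m)%N -> normc (\sum_i x i ^+ m) <= K * q ^+ m) ->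
  forall i, normc (x i) <= q.
Proof.
move=> q0 bound i0.
have [c c_neq0 [Q QE]] := power_sums_isolate x i0.
have c_gt0 : 0 < normc c.
  rewrite lt_def normc_ge0 andbT; apply: contra c_neq0 => /eqP.
  by move/ComplexField.Normc.eq0_normc => ->.
apply: (ler_of_geometric_bound
  (B := \sum_(a < size Q) normc Q`_a * K * q ^+ a) (N := N) c_gt0)
  => // [|m Nm]; first exact: normc_ge0.
rewrite -normcX -ComplexField.Normc.normcM -QE.
apply: le_trans (normc_sum_le _ _ _) _; rewrite mulr_suml; apply: ler_sum => a _.
rewrite ComplexField.Normc.normcM -!mulrA ler_wpM2l ?normc_ge0 //.
by rewrite -exprD addnC bound // (leq_trans Nm (leq_addl _ _)).
Qed.

Section TriangularProducts.
Variable K : comPzRingType.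

Lemma trig_mxM n (A B : 'M[K]_n) :
  is_trig_mx A -> is_trig_mx B ->
  is_trig_mx (A *m B) /\ forall i, (A *m B) i i = A i i * B i i.
Proof.
move=> /is_trig_mxP trigA /is_trig_mxP trigB; split.
  apply/is_trig_mxP => i j lt_ij; rewrite mxE big1 // => l _.
  have [lt_il|le_li] := ltnP i l; first by rewrite trigA // mul0r.
  by rewrite trigB ?mulr0 // (leq_ltn_trans le_li lt_ij).
move=> i; rewrite mxE (bigD1 i) //= big1 ?addr0 // => l /negbTE l_neq_i.
have [lt_il|le_li] := ltnP i l; first by rewrite trigA // mul0r.
rewrite trigB ?mulr0 // ltn_neqAle le_li andbT.
by apply: contraFN l_neq_i => /eqP/val_inj ->.
Qed.

Lemma trig_mxX n (A : 'M[K]_n.+1) m : is_trig_mx A ->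
  is_trig_mx (A ^+ m) /\ forall i, (A ^+ m) i i = A i i ^+ m.
Proof.
move=> trigA; elim: m => [|m [trigAm diagAm]].
  by split=> [|i]; rewrite ?expr0 ?mxE ?eqxx ?scalar_mx_is_trig.
have [trigAAm diagAAm] := trig_mxM trigA trigAm.
by split=> [|i]; rewrite exprS // diagAAm diagAm -exprS.
Qed.

End TriangularProducts.

Lemma conjmxX (F : fieldType) n (P A : 'M[F]_n.+1) m :
  P \in unitmx -> conjmx P (A ^+ m) = conjmx P A ^+ m.
Proof.
move=> Pu; elim: m => [|m IH]; first by rewrite !expr0 conjmx_scalar ?row_free_unit.
by rewrite !exprS -IH (conjmxM (V := P)) ?inE ?stablemx_unit.
Qed.

Lemma mxtrace_conjmx (F : fieldType) n (P A : 'M[F]_n) :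
  P \in unitmx -> \tr (conjmx P A) = \tr A.
Proof. by move=> Pu; rewrite conjumx // mxtrace_mulC mulmxA mulVmx ?mul1mx. Qed.

Section SpectralRadius.
Variable R : realType.

Definition cplx_mx n (M : 'M[R]_n) : 'M[R[i]]_n := map_mx (fun x => (x%:C)%C) M.

Lemma cplx_mxX n (M : 'M[R]_n.+1) m : cplx_mx (M ^+ m) = cplx_mx M ^+ m.
Proof.
elim: m => [|m IH]; first exact: (map_mx1 (real_complex R)).
by rewrite !exprS -IH; exact: (map_mxM (real_complex R)).
Qed.

Section Triangularization.
Variables (d : nat) (M : 'M[R]_d.+1) (P : 'M[R[i]]_d.+1).
Hypotheses (Pu : P \in unitmx) (trigT : is_trig_mx (conjmx P (cplx_mx M))).
Local Notation T := (conjmx P (cplx_mx M)).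

Lemma eigenvalue_cplx_mx_trig a : eigenvalue (cplx_mx M) a <-> exists i, a = T i i.
Proof.
rewrite eigenvalue_root_min -(mxminpoly_uconj _ Pu) -eigenvalue_root_min.
rewrite eigenvalue_root_char char_poly_trig //.
rewrite -(big_map (fun i => T i i) xpredT (fun b => 'X - b%:P)) root_prod_XsubC.
split=> [/mapP [i _ ->]|[i ->]]; first by exists i.
by apply/mapP; exists i; rewrite ?mem_index_enum.
Qed.

Lemma spec_rad_trig :
  spec_rad M = sup [set normc (T i i) | i in [set: 'I_d.+1]].
Proof.
congr sup; apply/seteqP; split=> x /= [a].
  by move=> /eigenvalue_cplx_mx_trig [i ->] <-; exists i.
by move=> _ <-; exists (T a a) => //; apply/eigenvalue_cplx_mx_trig; exists a.
Qed.

Let diag_has_sup : has_sup [set normc (T i i) | i in [set: 'I_d.+1]].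
Proof.
split; first by exists (normc (T ord0 ord0)), ord0.
exists (\sum_i normc (T i i)) => _ [i _ <-].
by rewrite (bigD1 i) //= lerDl sumr_ge0 // => j _; exact: normc_ge0.
Qed.

Lemma normc_diag_le_spec_rad i : normc (T i i) <= spec_rad M.
Proof. by rewrite spec_rad_trig; apply: sup_upper_bound; [exact: diag_has_sup | exists i]. Qed.

Lemma spec_rad_le_diag q : (forall i, normc (T i i) <= q) -> spec_rad M <= q.
Proof.
move=> le_q; rewrite spec_rad_trig; apply: ge_sup; first by exists (normc (T ord0 ord0)), ord0.
by move=> _ [i _ <-].
Qed.

Lemma mxtrace_exp_trig m : ((\tr (M ^+ m))%:C)%C = \sum_i T i i ^+ m.
Proof.
rewrite -(trace_map_mx (real_complex R)) -/(cplx_mx _) cplx_mxX.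
rewrite -(mxtrace_conjmx _ Pu) conjmxX //.
by apply: eq_bigr => i _; rewrite (trig_mxX m trigT).2.
Qed.

End Triangularization.

Lemma cplx_mx_trigonalizable d (M : 'M[R]_d.+1) :
  exists2 P, P \in unitmx & is_trig_mx (conjmx P (cplx_mx M)).
Proof. by have [P /unitarymx_unit Pu trigT] := Schur (cplx_mx M) isT; exists P. Qed.

Lemma spec_rad0 (M : 'M[R]_0) : spec_rad M = 0.
Proof.
rewrite /spec_rad (_ : [set _ | _ in _] = set0) ?sup0 //.
by apply/seteqP; split=> // _ [a /= + _]; rewrite /eigenvalue [eigenspace _ _]flatmx0 eqxx.
Qed.

Lemma spec_rad_ge0 n (M : 'M[R]_n) : 0 <= spec_rad M.
Proof.
case: n M => [|d] M; first by rewrite spec_rad0.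
have [P Pu trigT] := cplx_mx_trigonalizable M.
exact: le_trans (normc_ge0 _) (normc_diag_le_spec_rad Pu trigT ord0).
Qed.

Lemma mxtrace_le_spec_rad n (M : 'M[R]_n) : `|\tr M| <= n%:R * spec_rad M.
Proof.
case: n M => [|d] M; first by rewrite /mxtrace big_ord0 normr0 mul0r.
have [P Pu trigT] := cplx_mx_trigonalizable M.
rewrite -normc_real -[M]expr1 (mxtrace_exp_trig Pu trigT).
apply: le_trans (normc_sum_le _ _ _) _.
apply: le_trans (ler_sum _ (fun i _ => normc_diag_le_spec_rad Pu trigT i)) _.
by rewrite sumr_const card_ord mulr_natl.
Qed.

Lemma spec_rad_le_of_mxtrace_exp n (M : 'M[R]_n) (K q : R) N : 0 <= q ->
  (forall m, (N <= m)%N -> `|\tr (M ^+ m)| <= K * q ^+ m) -> spec_rad M <= q.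
Proof.
case: n M => [|d] M q0 bound; first by rewrite spec_rad0.
have [P Pu trigT] := cplx_mx_trigonalizable M.
apply: (spec_rad_le_diag Pu trigT).
apply: (normc_le_of_power_sums (K := K) (N := N)) => // m Nm.
by rewrite -(mxtrace_exp_trig Pu trigT) normc_real bound.
Qed.

End SpectralRadius.

Lemma prod_periodic (S : pzSemiRingType) (G : nat -> S) t j :
  \prod_(s < j * t) G (s %% t)%N = (\prod_(s < t) G s) ^+ j.
Proof.
elim: j => [|j IH]; first by rewrite mul0n big_ord0 expr0.
rewrite mulSn big_split_ord exprS -IH; congr (_ * _); apply: eq_bigr => s _ /=.
  by rewrite modn_small.
by rewrite modnDl.
Qed.

Section ConvexHullProducts.
Variables (R : realType) (n L : nat) (F : 'I_L -> 'M[R]_n).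
Hypothesis L_gt0 : (0 < L)%N.

Lemma conv_hull_vertex l : conv_hull F (F l).
Proof.
exists (fun l' => (l' == l)%:R); split=> [l'|]; first by rewrite ler0n.
split; first by rewrite (bigD1 l) //= eqxx big1 ?addr0 // => l' /negbTE ->.
rewrite (bigD1 l) //= eqxx scale1r big1 ?addr0 // => l' /negbTE ->.
by rewrite scale0r.
Qed.

Lemma mxtrace_prod_conv_hull_le m (A : 'M[R]_n) (H : nat -> 'M[R]_n) (b : R) :
  (forall s, conv_hull F (H s)) ->
  (forall g : nat -> 'I_L, `|\tr (A *m \prod_(s < m) F (g s))| <= b) ->
  `|\tr (A *m \prod_(s < m) H s)| <= b.
Proof.
elim: m A H => [|m IH] A H hullH bound.
  by have := bound (fun=> Ordinal L_gt0); rewrite !big_ord0.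
have [w [w_ge0 [w_sum1 H0E]]] := hullH 0%N.
have bound_l l : `|\tr ((A *m F l) *m \prod_(s < m) H s.+1)| <= b.
  apply: (IH _ (fun s => H s.+1)) => [s|g]; first exact: hullH.
  have := bound (fun s => if s is s'.+1 then g s' else l).
  by rewrite big_ord_recl mulmxA.
rewrite big_ord_recl H0E -mulmxE mulmx_suml mulmx_sumr raddf_sum /=.
apply: le_trans (ler_norm_sum _ _ _) _.
apply: le_trans (_ : \sum_l w l * b <= _); last by rewrite -mulr_suml w_sum1 mul1r.
apply: ler_sum => l _; rewrite -scalemxAl -scalemxAr mxtraceZ normrM ger0_norm //.
by rewrite ler_wpM2l // mulmxA.
Qed.

End ConvexHullProducts.

Lemma image_conv_hull_affine (R : realType) L m n q (F : 'I_L -> 'M[R]_(m, n))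
    (C : 'M[R]_(m, q)) (A : 'M[R]_(n, q)) :
  [set C + B *m A | B in conv_hull F] = conv_hull (fun l => C + F l *m A).
Proof.
have affine_comb w : \sum_l w l = 1 ->
    \sum_l w l *: (C + F l *m A) = C + (\sum_l w l *: F l) *m A.
  move=> w_sum; under eq_bigr do rewrite scalerDr scalemxAl.
  by rewrite big_split /= -scaler_suml w_sum scale1r mulmx_suml.
apply/seteqP; split=> X.
  by move=> [_ [w [w_ge0 [w_sum ->]]] <-]; exists w; rewrite affine_comb.
move=> [w [w_ge0 [w_sum ->]]]; exists (\sum_l w l *: F l); first by exists w.
by rewrite affine_comb.
Qed.

Section LimsupFacts.
Variable R : realType.
Local Open Scope ereal_scope.
Implicit Types (u v : (\bar R)^nat).

Lemma le_limn_esup u v : (forall t, u t <= v t) -> limn_esup u <= limn_esup v.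
Proof.
move=> le_uv; apply: le_ereal_inf_tmp => _ [V FV <-].
apply: le_trans (ereal_inf_lbound _) _; first by exists V.
apply: ge_ereal_sup => _ [t Vt <-].
by apply: le_trans (le_uv t) _; apply: ereal_sup_ubound; exists t.
Qed.

Lemma limn_esup_le_eventually v J N :
  (forall t, (N <= t)%N -> v t <= J) -> limn_esup v <= J.
Proof.
move=> le_vJ; apply: le_trans (ereal_inf_lbound _) _.
  by exists [set t | (N <= t)%N] => //; exists N.
by apply: ge_ereal_sup => _ [t Nt <-]; exact: le_vJ.
Qed.

Lemma limn_esup_lt_eventually u s :
  limn_esup u < s -> exists N, forall t, (N <= t)%N -> u t < s.
Proof.
move/ereal_inf_lt => [_ [V [N _ NV] <-] lt_s].
exists N => t Nt; apply: le_lt_trans lt_s; apply: ereal_sup_ubound.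
by exists t => //; exact: NV.
Qed.

Lemma lee_real_gt (x y : \bar R) : (forall s : R, y < s%:E -> x <= s%:E) -> x <= y.
Proof.
case: y => [y| |] le_x; last 2 first.
- by rewrite leey.
- case: x le_x => [x| |] le_x //.
    have := le_x (x - 1)%R (ltNyr _); rewrite lee_fin => le_x1.
    exfalso; lra.
  by have := le_x 0%R (ltNyr _).
apply/lee_addgt0Pr => e e0; apply: le_x.
by rewrite lte_fin ltrDl.
Qed.

End LimsupFacts.

Lemma powR_inv_exprn (R : realType) (x : R) m :
  (0 < m)%N -> 0 <= x -> (x `^ m%:R^-1) ^+ m = x.
Proof.
move=> m_gt0 x0; rewrite -powR_mulrn ?powR_ge0 // -powRrM mulVf ?powRr1 //.
by rewrite pnatr_eq0 -lt0n.
Qed.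

Lemma exprn_powR_inv (R : realType) (x : R) m :
  (0 < m)%N -> 0 <= x -> (x ^+ m) `^ m%:R^-1 = x.
Proof.
move=> m_gt0 x0; rewrite -powR_mulrn // -powRrM mulfV ?powRr1 //.
by rewrite pnatr_eq0 -lt0n.
Qed.

Section JointSpectralRadius.
Variables (R : realType) (n L : nat) (F : 'I_L -> 'M[R]_n).
Hypothesis L_gt0 : (0 < L)%N.

Lemma spec_rad_prod_conv_hull_le t (Ms : 'I_t -> 'M[R]_n) (s : R) N :
  (0 < t)%N -> 0 <= s ->
  (forall m (g : nat -> 'I_L), (N <= m)%N -> spec_rad (\prod_(i < m) F (g i)) <= s ^+ m) ->
  (forall i, conv_hull F (Ms i)) -> spec_rad (\prod_(i < t) Ms i) <= s ^+ t.
Proof.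
case: t Ms => // t Ms _ s0 vertex_bound hullMs.
pose G i := Ms (inord i).
have -> : \prod_(i < t.+1) Ms i = \prod_(i < t.+1) G i.
  by apply: eq_bigr => i _; rewrite /G inord_val.
apply: (spec_rad_le_of_mxtrace_exp (K := n%:R) (N := N)); first exact: exprn_ge0.
move=> j Nj; rewrite -exprM mulnC -prod_periodic -[X in \tr X]mul1mx.
apply: (mxtrace_prod_conv_hull_le L_gt0 (H := fun i => G (i %% t.+1)%N)) => [i|g].
  exact: hullMs.
rewrite mul1mx; apply: le_trans (mxtrace_le_spec_rad _) _.
by rewrite ler_wpM2l // vertex_bound // (leq_trans Nj) // leq_pmulr.
Qed.

Theorem jsr_conv_hull : jsr (conv_hull F) = jsr [set F l | l in [set: 'I_L]].
Proof.
apply/eqP; rewrite eq_le; apply/andP; split; last first.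
  apply: le_limn_esup => t; apply: ereal_sup_le => _ [Ms vertMs <-].
  exists Ms => // i; have [l _ <-] := vertMs i; exact: conv_hull_vertex.
(* Every term with t >= 1 lies below each real s above the joint spectral radius of F. *)
apply: (limn_esup_le_eventually (N := 1)) => t t_gt0.
apply: lee_real_gt => s lt_s; have [N Nbound] := limn_esup_lt_eventually lt_s.
have root_bound m (g : nat -> 'I_L) : (maxn N 1 <= m)%N ->
    spec_rad (\prod_(i < m) F (g i)) `^ m%:R^-1 < s.
  rewrite geq_max => /andP [Nm _]; rewrite -lte_fin.
  apply: le_lt_trans (Nbound m Nm); apply: ereal_sup_ubound.
  by exists (fun i : 'I_m => F (g i)) => // i; exists (g i).
have s0 : 0 <= s.
  apply: ltW; apply: le_lt_trans (root_bound _ (fun=> Ordinal L_gt0) (leqnn _)).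
  exact: powR_ge0.
apply: ge_ereal_sup => _ [Ms hullMs <-]; rewrite lee_fin.
rewrite -(exprn_powR_inv t_gt0 s0) ge0_ler_powR ?nnegrE ?exprn_ge0 ?spec_rad_ge0 //.
apply: (spec_rad_prod_conv_hull_le (N := maxn N 1)) => // m g Nm.
rewrite -(powR_inv_exprn (leq_trans (leq_maxr _ _) Nm) (spec_rad_ge0 _)).
apply: lerXn2r; rewrite ?nnegrE ?powR_ge0 //.
exact: ltW (root_bound _ _ Nm).
Qed.

End JointSpectralRadius.

Lemma continuous_sumr (R : numFieldType) (T : topologicalType) (I : Type) (s : seq I)
    (P : pred I) (G : I -> T -> R) :
  (forall i, continuous (G i)) -> continuous (fun t => \sum_(i <- s | P i) G i t).
Proof. by move=> Gc; apply: continuous_big => [|i _]; [exact: add_continuous | exact: Gc]. Qed.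

Lemma continuous_mulmx_coord (R : numFieldType) (T : topologicalType) m n
    (A : 'M[R]_(m, n)) (v : T -> 'cV[R]_n) :
  (forall a, continuous (fun t => v t a 0)) -> forall j, continuous (fun t => (A *m v t) j 0).
Proof.
move=> v_cont j; under eq_fun do rewrite mxE.
apply: continuous_sumr => a; change (continuous (cst (A j a) \* (fun t => v t a 0))).
by move=> t; apply: continuousM; [exact: cvg_cst | exact: v_cont].
Qed.

Lemma closure_bigcup_seq (T : topologicalType) (I : eqType) (s : seq I)
    (A : I -> set T) x :
  closure [set y | exists2 i, i \in s & A i y] x -> exists2 i, i \in s & closure (A i) x.
Proof.
elim: s => [|i s IH].
  by rewrite (_ : [set _ | _] = set0) ?closure0 //; apply/seteqP; split=> y // [].
have -> : [set y | exists2 j, j \in i :: s & A j y] =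
    A i `|` [set y | exists2 j, j \in s & A j y].
  apply/seteqP; split=> y /=.
    by move=> [j]; rewrite inE => /predU1P [->|js Aj]; [left | right; exists j].
  by case=> [Ai|[j js Aj]]; [exists i; rewrite ?mem_head | exists j; rewrite // inE js orbT].
rewrite closureU => -[Ai|/IH [j js Aj]]; first by exists i; rewrite ?mem_head.
by exists j; rewrite // inE js orbT.
Qed.

Section SegmentIncrements.
Variable R : realType.

Lemma closure_realP (A : set R) x :
  closure A x <-> forall e, 0 < e -> exists2 y, A y & `|y - x| < e.
Proof.
split=> [Ax e e0|Ax B /nbhs_ballP [e /= e0 eB]].
  have [y [Ay xy]] := Ax _ (nbhsx_ballx x e e0).
  by exists y; rewrite // distrC.
have [y Ay xy] := Ax e e0; exists y; split=> //; apply: eB.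
by rewrite /ball /= distrC.
Qed.

Lemma closure_itv_co_sup (a b : R) : a < b -> closure [set x | a <= x < b] b.
Proof.
move=> ab; apply/closure_realP => e e0.
exists (b - Num.min e (b - a) / 2).
  have : Num.min e (b - a) <= b - a by rewrite ge_min lexx orbT.
  have : 0 < Num.min e (b - a) by rewrite lt_min e0 subr_gt0 ab.
  move=> /= m0 mba; apply/andP; split; lra.
have : Num.min e (b - a) <= e by rewrite ge_min lexx.
have : 0 < Num.min e (b - a) by rewrite lt_min e0 subr_gt0 ab.
move=> m0 me; rewrite addrAC subrr add0r normrN gtr0_norm; lra.
Qed.

Lemma closure_const (f : R -> R) (A : set R) k :
  continuous f -> (forall y, A y -> f y = k) -> forall x, closure A x -> f x = k.
Proof.
move=> fc fA x Ax; have /closure_id fkE : closed (f @^-1` [set k]).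
  by apply: preimage_closed => [y _|]; [exact: fc | exact: closed_eq].
suff : (f @^-1` [set k]) x by [].
by rewrite fkE; apply: closureS Ax => y /fA.
Qed.

Lemma closure_affine m n (phi : R -> 'M[R]_(m, n)) (A : set R) (v : 'M[R]_(m, n)) :
  (forall i j, continuous (fun t => phi t i j)) ->
  (forall s t, A s -> A t -> phi t - phi s = (t - s) *: v) ->
  forall s t, closure A s -> closure A t -> phi t - phi s = (t - s) *: v.
Proof.
move=> phi_cont affA s t As At; have [s0 As0 _] := (closure_realP A s).1 As 1 ltr01.
apply/matrixP => i j; rewrite !mxE.
pose e u := phi u i j - u * v i j.
have e_cont : continuous e.
  move=> u; apply: (continuousD (f := fun u => phi u i j)); first exact: phi_cont.
  apply: (continuousN (f := (fun u => u) \* cst (v i j))).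
  by apply: continuousM; [exact: cvg_id | exact: cvg_cst].
have eA u : A u -> e u = e s0.
  move=> Au; have /matrixP/(_ i j) := affA s0 u As0 Au.
  by rewrite !mxE /e => ?; lra.
have := closure_const e_cont eA At; have := closure_const e_cont eA As.
by rewrite /e; lra.
Qed.

Lemma closure_cover_end (I : finType) (T : I -> set R) (S : {set I}) a b :
  a < b -> (forall x, a <= x < b -> exists2 l, l \in S & T l x) ->
  exists2 j, j \in S & closure (T j `&` [set x | a <= x < b]) b.
Proof.
move=> ab cover.
have : closure [set y | exists2 l, l \in enum S & (T l `&` [set x | a <= x < b]) y] b.
  apply: closureS (closure_itv_co_sup ab) => x axb.
  by have [l lS Tl] := cover x axb; exists l; rewrite ?mem_enum.
by move/closure_bigcup_seq => [j]; rewrite mem_enum; exists j.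
Qed.

Lemma closure_piece_inf (A : set R) a b :
  closure (A `&` [set x | a <= x < b]) b ->
  exists c, [/\ a <= c <= b, closure A c, closure A b &
                forall x, a <= x < c -> ~ A x].
Proof.
pose E := A `&` [set x | a <= x < b] => bE.
have [x0 E0 _] := (closure_realP E b).1 bE 1 ltr01.
have infE : has_inf E by split; [exists x0 | exists a => x [_ /andP []]].
have infE_b : inf E <= b.
  by apply: le_trans (ge_inf infE.2 E0) _; case: E0 => _ /andP [_ /ltW].
exists (inf E); split.
- by rewrite infE_b andbT; apply: lb_le_inf; [exists x0 | move=> x [_ /andP []]].
- apply/closure_realP => e e0; have [y Ey ye] := inf_adherent e0 infE.
  have infE_y := ge_inf infE.2 Ey.
  by exists y; [case: Ey | rewrite ger0_norm ?subr_ge0 //; lra].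
- by apply: closureS bE => x [].
- move=> x /andP [ax xc] Ax.
  have /(ge_inf infE.2) : E x by split=> //=; rewrite ax (lt_le_trans xc).
  by rewrite leNgt xc.
Qed.

Lemma piecewise_affine_increment (V : lmodType R) (I : finType) (T : I -> set R)
    (phi : R -> V) (v : I -> V) :
  (forall l s t, closure (T l) s -> closure (T l) t -> phi t - phi s = (t - s) *: v l) ->
  forall (S : {set I}) a b, a <= b ->
  (forall x, a <= x < b -> exists2 l, l \in S & T l x) ->
  exists w : I -> R, [/\ forall l, 0 <= w l, \sum_l w l = b - a &
                         phi b - phi a = \sum_l w l *: v l].
Proof.
move=> affine S; have [k cardS] := ubnP #|S|; elim: k S cardS => // k IH S.
rewrite ltnS => cardS a b; rewrite le_eqVlt => /predU1P [<- _|ab cover].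
  by exists (fun=> 0); split; rewrite ?subrr ?big1 // => l _; rewrite scale0r.
have [j jS /closure_piece_inf [c [/andP [ac cb] Tj_c Tj_b notTj]]] := closure_cover_end ab cover.
have [w [w_ge0 w_sum w_incr]] : exists w : I -> R, [/\ forall l, 0 <= w l,
    \sum_l w l = c - a & phi c - phi a = \sum_l w l *: v l].
  apply: (IH (S :\ j) _ a c ac); first by move: cardS; rewrite (cardsD1 j) jS.
  move=> x /andP [ax xc].
  have [l lS Tl] : exists2 l, l \in S & T l x by apply: cover; rewrite ax (lt_le_trans xc cb).
  exists l => //; rewrite !inE lS andbT; apply/eqP => lj.
  by apply: (notTj x); rewrite ?ax ?xc // -lj.
exists (fun l => w l + (if l == j then b - c else 0)); split.
- by move=> l; rewrite addr_ge0 //; case: ifP; rewrite ?subr_ge0.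
- rewrite big_split /= w_sum (bigD1 j) //= eqxx big1 ?addr0; first by lra.
  by move=> l /negbTE ->.
- under eq_bigr do rewrite scalerDl; rewrite big_split /= -w_incr (bigD1 j) //= eqxx.
  rewrite big1 ?addr0 -?(affine j c b Tj_c Tj_b); first by rewrite addrC addrA subrK.
  by move=> l /negbTE ->; rewrite scale0r.
Qed.

End SegmentIncrements.

Lemma full_col_rank_linv (F : fieldType) p r (alpha : 'M[F]_(p, r)) :
  \rank alpha = r -> (pinvmx alpha^T)^T *m alpha = 1%:M.
Proof.
move=> rank_alpha; have free_alphaT : row_free alpha^T by rewrite /row_free mxrank_tr rank_alpha.
apply: trmx_inj; rewrite trmx_mul trmxK trmx1.
by have := mulmxKp free_alphaT 1%:M; rewrite mul1mx.
Qed.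

Section ConvexPartition.
Variables (R : realType) (p L : nat) (Z : 'I_L -> set 'cV[R]_p).
Hypothesis Zpart : convex_partition Z.

Lemma convex_partition_cover x : exists l, Z l x.
Proof.
have [_ [_ coverZ]] := Zpart; have : [set: 'cV[R]_p] x by [].
by rewrite -coverZ => -[l _ Zlx]; exists l.
Qed.

Lemma convex_partition_eq l l' x : Z l x -> Z l' x -> l = l'.
Proof.
move=> Zlx Zl'x; apply/eqP; apply: contrapT => /negP l_neq_l'.
have [_ [disjZ _]] := Zpart.
by have := disjZ _ _ l_neq_l'; rewrite -subset0 => /(_ x); apply.
Qed.

Lemma pwaffE q (a : 'I_L -> 'cV[R]_q) (A : 'I_L -> 'M[R]_(q, p)) l x :
  Z l x -> pwaff Z a A x = a l + A l *m x.
Proof.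
move=> Zlx; rewrite /pwaff (bigD1 l) //= indicE mem_set // scale1r big1 ?addr0 //.
move=> l' l'_neq_l; rewrite indicE memNset ?scale0r // => Zl'x.
by move/eqP: l'_neq_l; apply; apply: convex_partition_eq Zl'x Zlx.
Qed.

Lemma pwaffB q (a : 'I_L -> 'cV[R]_q) (A : 'I_L -> 'M[R]_(q, p)) l x x' :
  Z l x -> Z l x' -> pwaff Z a A x - pwaff Z a A x' = A l *m (x - x').
Proof.
by move=> Zlx Zlx'; rewrite !(pwaffE _ _ Zlx, pwaffE _ _ Zlx') mulmxBr opprD addrACA subrr add0r.
Qed.

End ConvexPartition.

Lemma stackvB (R : realType) m p q (u v : nat -> 'cV[R]_p) (G : nat -> 'M[R]_(p, q))
    (d : 'cV[R]_q) :
  (forall a, u a - v a = G a *m d) -> stackv m u - stackv m v = stackM m G *m d.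
Proof.
move=> uvG; apply/matrixP => i j; rewrite ord1 !mxE.
have /matrixP/(_ (blk_pos i) 0) := uvG (i %/ p)%N; rewrite !mxE => ->.
by apply: eq_bigr => b _; rewrite mxE.
Qed.

Section PiecewiseAffineVAR.
Variables (R : realType) (p k r L : nat) (Z : 'I_L -> set 'cV[R]_p).
Variables (phibar : 'I_k.+1 -> 'I_L -> 'cV[R]_p) (Phi : 'I_k.+1 -> 'I_L -> 'M[R]_p).
Variables (alpha : 'M[R]_(p, r)) (mubar : 'I_L -> 'cV[R]_r) (beta : 'I_L -> 'M[R]_(p, r)).
Variable f0inv : 'cV[R]_p -> 'cV[R]_p.
Hypothesis Zpart : convex_partition Z.
Hypothesis f_cont : forall i, continuous (fVAR Z phibar Phi i).
Hypothesis rank_alpha : \rank alpha = r.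
Hypothesis pibarE : forall l, pibarVAR phibar l = alpha *m mubar l.
Hypothesis PiE : forall l, PiVAR Phi l = alpha *m (beta l)^T.
Hypothesis f0invK : cancel f0inv (fVAR Z phibar Phi ord0).
Hypothesis f0inv_cont : continuous f0inv.
Hypothesis Phi0_unit : forall l, Phi ord0 l \in unitmx.

Local Notation f := (fVAR Z phibar Phi).
Local Notation btheta := (bthetaVAR Z phibar Phi mubar beta).

Definition piVAR x := - f ord0 x + \sum_(i < k.+1 | (0 < i)%N) f i x.

Definition jacVAR l := col_mx (beta l)^T (bGammaVAR Phi l) *m invmx (Phi ord0 l).

Lemma alpha_thetaVAR x : alpha *m thetaVAR Z mubar beta x = piVAR x.
Proof.
have [l Zlx] := convex_partition_cover Zpart x.
rewrite /thetaVAR (pwaffE Zpart _ _ Zlx) mulmxDr mulmxA -pibarE -PiE /piVAR.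
rewrite /fVAR (pwaffE Zpart _ _ Zlx) (eq_bigr _ (fun i _ => pwaffE Zpart _ _ Zlx)).
rewrite big_split /= -mulmx_suml /pibarVAR /PiVAR mulNmx mulmxBl !opprB.
by rewrite opprD addrACA addrC.
Qed.

Lemma thetaVARE x : thetaVAR Z mubar beta x = (pinvmx alpha^T)^T *m piVAR x.
Proof. by rewrite -alpha_thetaVAR mulmxA full_col_rank_linv // mul1mx. Qed.

Lemma bthetaVARB l x x' : Z l x -> Z l x' ->
  btheta x - btheta x' = col_mx (beta l)^T (bGammaVAR Phi l) *m (x - x').
Proof.
move=> Zlx Zlx'; rewrite opp_col_mx add_col_mx mul_col_mx; congr col_mx.
  exact: pwaffB.
apply: stackvB => a; rewrite /gVAR /GammaVAR opprK addrC -sumrB mulNmx mulmx_suml.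
rewrite -sumrN; apply: eq_bigr => i _.
by rewrite /fVAR (pwaffB Zpart _ _ Zlx' Zlx) -mulmxN opprB.
Qed.

Lemma f0invB l y y' : Z l (f0inv y) -> Z l (f0inv y') ->
  f0inv y - f0inv y' = invmx (Phi ord0 l) *m (y - y').
Proof.
move=> Zly Zly'; rewrite -{2}(f0invK y) -{2}(f0invK y') /fVAR (pwaffB Zpart _ _ Zly Zly').
by rewrite mulKmx.
Qed.

Lemma btheta_f0inv_continuous i : continuous (fun y => btheta (f0inv y) i 0).
Proof.
have f_f0inv_cont j a : continuous (fun y => f j (f0inv y) a 0).
  move=> y; apply: (@continuous_comp _ _ _ (fun y => f j (f0inv y)) (fun v : 'cV[R]_p => v a 0)).
    by apply: continuous_comp; [exact: f0inv_cont | exact: f_cont].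
  exact: coord_continuous.
case: (splitP i) => [j iE|j iE].
  have -> : i = lshift _ j by exact: val_inj.
  under eq_fun do rewrite col_mxEu thetaVARE /piVAR f0invK.
  apply: continuous_mulmx_coord => a; under eq_fun do rewrite !mxE summxE.
  move=> y; apply: (continuousD (f := fun y : 'cV[R]_p => - y a 0)).
    by apply: (continuousN (f := fun y : 'cV[R]_p => y a 0)); exact: coord_continuous.
  by apply: continuous_sumr => i'; exact: f_f0inv_cont.
have -> : i = rshift _ j by exact: val_inj.
rewrite (_ : (fun y => _) = fun y : 'cV[R]_p =>
    - \sum_(i < k.+1 | ((j %/ p).+1 < i)%N) f i (f0inv y) (blk_pos j) 0); last first.
  by apply: funext => y; rewrite col_mxEd /bgVAR /stackv !mxE summxE.
by move=> y; apply: continuousN; apply: continuous_sumr => i'; exact: f_f0inv_cont.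
Qed.

Lemma btheta_f0inv_increment z z' : exists w : 'I_L -> R,
  [/\ forall l, 0 <= w l, \sum_l w l = 1 &
      btheta (f0inv z) - btheta (f0inv z') =
      \sum_l w l *: (jacVAR l *m (z - z'))].
Proof.
pose phi t := btheta (f0inv (z' + t *: (z - z'))).
pose T l := [set t : R | Z l (f0inv (z' + t *: (z - z')))].
have phi_cont i j : continuous (fun t => phi t i j).
  rewrite ord1 => t; apply: (@continuous_comp _ _ _ (fun t : R => z' + t *: (z - z'))
    (fun y => btheta (f0inv y) i 0)); last exact: btheta_f0inv_continuous.
  apply: (continuousD (f := cst z')); first exact: cvg_cst.
  exact: (@continuousZr_tmp _ _ _ (fun t : R => t) (z - z') t cvg_id).
have affine l s t : closure (T l) s -> closure (T l) t ->
    phi t - phi s = (t - s) *: (jacVAR l *m (z - z')).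
  apply: closure_affine => // {}s {}t Ts Tt.
  rewrite /phi (bthetaVARB Tt Ts) (f0invB Tt Ts) opprD addrACA subrr add0r -scalerBl.
  by rewrite /jacVAR -!scalemxAr mulmxA.
have cover x : 0 <= x < 1 -> exists2 l, l \in [set: 'I_L]%SET & T l x.
  have [l Zl] := convex_partition_cover Zpart (f0inv (z' + x *: (z - z'))).
  by exists l; rewrite ?in_setT.
have [w [w_ge0 w_sum w_incr]] := piecewise_affine_increment affine ler01 cover.
exists w; split=> //; first by rewrite w_sum subr0.
by move: w_incr; rewrite /phi scale1r scale0r addr0 [z' + _]addrC subrK.
Qed.

Lemma bbetaT_mul l (d : 'cV[R]_p) (delta : 'cV[R]_(k.-1 * p)) :
  bbetaT Phi beta l *m col_mx d delta =
  jacVAR l *m d + bD0 R p k r *m col_mx d delta.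
Proof.
by rewrite /bbetaT /bD0 /jacVAR !mul_block_col !mul0mx !add0r addr0 !mul_col_mx add_col_mx addr0.
Qed.

Lemma btheta_increment_conv_hull (z z' : 'cV[R]_p) (zeta zeta' : 'cV[R]_(k.-1 * p)) :
  exists2 bBT : 'M[R]_(r + k.-1 * p, p + k.-1 * p), conv_hull (bbetaT Phi beta) bBT &
    (btheta (f0inv z) + bD0 R p k r *m col_mx z zeta)
    - (btheta (f0inv z') + bD0 R p k r *m col_mx z' zeta')
    = bBT *m (col_mx z zeta - col_mx z' zeta').
Proof.
have [w [w_ge0 w_sum w_incr]] := btheta_f0inv_increment z z'.
exists (\sum_l w l *: bbetaT Phi beta l); first by exists w.
rewrite opprD addrACA w_incr -mulmxBr mulmx_suml opp_col_mx add_col_mx.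
rewrite [in RHS](eq_bigr _ (fun l _ => esym (scalemxAl _ _ _))).
under [in RHS]eq_bigr do rewrite bbetaT_mul scalerDr.
by rewrite big_split /= -scaler_suml w_sum scale1r.
Qed.

End PiecewiseAffineVAR.

Unset Implicit Arguments.

Theorem lemma6p1 (R : realType) (p k r L : nat)
    (Z : 'I_L -> set 'cV[R]_p)
    (phibar : 'I_k.+1 -> 'I_L -> 'cV[R]_p)
    (Phi : 'I_k.+1 -> 'I_L -> 'M[R]_p)
    (c : 'cV[R]_p)
    (alpha : 'M[R]_(p, r))
    (mu : 'cV[R]_r) (mubar : 'I_L -> 'cV[R]_r) (beta : 'I_L -> 'M[R]_(p, r))
    (f0inv : 'cV[R]_p -> 'cV[R]_p) :
  (1 <= p)%N -> (1 <= k)%N -> (r <= p)%N ->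
  (* piecewise affine VAR *)
  convex_partition Z ->
  (forall i, continuous (fVAR Z phibar Phi i)) ->
  (forall i, fVAR Z phibar Phi i 0 = 0) ->
  (* alpha of rank r and condition (1) *)
  \rank alpha = r ->
  c = alpha *m mu ->
  (forall l, pibarVAR phibar l = alpha *m mubar l) ->
  (forall l, PiVAR Phi l = alpha *m (beta l)^T) ->
  (* condition (2): f_0 is a homeomorphism with inverse f0inv,
     and each Phi_0^(l) is invertible *)
  cancel (fVAR Z phibar Phi ord0) f0inv ->
  cancel f0inv (fVAR Z phibar Phi ord0) ->
  continuous f0inv ->
  (forall l, Phi ord0 l \in unitmx) ->
  (forall (z z' : 'cV[R]_p) (zeta zeta' : 'cV[R]_(k.-1 * p)),
     exists2 bBT : 'M[R]_(r + k.-1 * p, p + k.-1 * p),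
       conv_hull (bbetaT Phi beta) bBT &
       (bthetaVAR Z phibar Phi mubar beta (f0inv z)
          + bD0 R p k r *m col_mx z zeta)
       - (bthetaVAR Z phibar Phi mubar beta (f0inv z')
          + bD0 R p k r *m col_mx z' zeta')
       = bBT *m (col_mx z zeta - col_mx z' zeta'))
  /\
  jsr [set 1%:M + bBT *m balpha k alpha
      | bBT in conv_hull (bbetaT Phi beta)]
  = jsr [set 1%:M + bbetaT Phi beta l *m balpha k alpha | l in [set: 'I_L]].
Proof.
move=> _ _ _ Zpart f_cont _ rank_alpha _ pibarE PiE _ f0invK f0inv_cont Phi0_unit.
split; first exact: (btheta_increment_conv_hull Zpart f_cont rank_alpha pibarE PiE
  f0invK f0inv_cont Phi0_unit).
have [l _] := convex_partition_cover Zpart 0.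
by rewrite image_conv_hull_affine (jsr_conv_hull _ (leq_ltn_trans (leq0n l) (ltn_ord l))).
Qed.
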